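(* Fix $\mathbf{p}\in\mathbb{Z}^2\setminus\{\mathbf 0\}$ and $\mathbf a\in\mathbb{Z}^2$. For each positive integer $N$ large enough that $\mathbf a\in\mathcal D$, let $n$, $\rho_k$ and the $n\times n$ matrix $A'$ be as defined in the context (depending on $N$). Suppose that, for all sufficiently large $N$, $\rho_0<0$, $\rho_k\ge 0$ for all $k=1,2,\dots,n-1$, and $\rho_k=0$ for at most one $k\in\{1,\dots,n-1\}$. Then for all sufficiently large $N$, the matrix $A'$ has a non-zero real eigenvalue.
   Context: For a positive integer $N$ let $\mathcal D=[-N,N]^2\cap\mathbb{Z}^2$, and for $\mathbf k\in\mathbb{Z}^2$ let $\widehat{\mathbf k}$ denote the unique element of $\mathcal D$ with $\mathbf k-\widehat{\mathbf k}\in(2N+1)\mathbb{Z}^2$. For $\mathbf a\in\mathcal D$ the (Zeitlin) class is $\Sigma'_{\mathbf a}=\{\widehat{\mathbf a+k\mathbf p}:k\in\mathbb{Z}\}$ and $n=|\Sigma'_{\mathbf a}|$; one has $n=(2N+1)/\gcd(2N+1,\gcd(|p_1|,|p_2|))$, which is odd, and $\widehat{\mathbf a+k\mathbf p}$ depends only on $k$ modulo $n$. Assuming $\mathbf 0\notin\Sigma'_{\mathbf a}$, define $\rho_k=\frac{1}{|\mathbf p|^2}-\frac{1}{|\widehat{\mathbf a+k\mathbf p}|^2}$ for $k\in\mathbb{Z}$ (an $n$-periodic sequence). $A'$ is the $n\times n$ matrix with rows and columns indexed by $0,1,\dots,n-1$ (taken modulo $n$) whose entries are $(A')_{j,j+1}=\rho_{j+1}$,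 $(A')_{j,j-1}=-\rho_{j-1}$ (indices mod $n$), and all other entries $0$. (This is the linearisation, restricted to one class and up to the scalar factor $\frac{\Gamma}{\varepsilon}\sin(\varepsilon\,\mathbf a\times\mathbf p)$, $\varepsilon=2\pi/(2N+1)$, of Zeitlin's sine truncation of the 2D Euler equations about the equilibrium with Fourier coefficients $\Gamma$ at $\pm\mathbf p$ and $0$ elsewhere.) *)

From HB Require Import structures.
From mathcomp Require Import all_boot all_order all_algebra.
From mathcomp Require Import reals.
Set Implicit Arguments. Unset Strict Implicit. Unset Printing Implicit Defensive.
Import Order.TTheory GRing.Theory Num.Theory.
Local Open Scope ring_scope.

Definition Z2 := (int * int)%type.

Definition modulus (N : nat) : int := (2 * N + 1)%N%:Z.

(* hat x for an integer coordinate: the unique element of [-N,N]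
   congruent to x modulo 2N+1. *)
Definition hat1 (N : nat) (x : int) : int :=
  ((x + N%:Z) %% modulus N)%Z - N%:Z.

Definition hat (N : nat) (k : Z2) : Z2 := (hat1 N k.1, hat1 N k.2).

Definition inD (N : nat) (k : Z2) : bool :=
  [&& - N%:Z <= k.1 <= N%:Z & - N%:Z <= k.2 <= N%:Z].

Definition clsElt (N : nat) (p a : Z2) (k : int) : Z2 :=
  hat N (a.1 + k * p.1, a.2 + k * p.2).

(* n = |Sigma'_a|; since hat(a + k p) depends only on k mod (2N+1), the
   class is the set of values for k = 0, ..., 2N. *)
Definition ncls (N : nat) (p a : Z2) : nat :=
  size (undup [seq clsElt N p a k%:Z | k <- iota 0 (2 * N + 1)]).

Definition zero_notin_cls (N : nat) (p a : Z2) : Prop :=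
  forall k : int, clsElt N p a k != (0, 0).

Definition sqnorm (k : Z2) : int := k.1 ^+ 2 + k.2 ^+ 2.

Definition rho (R : realType) (N : nat) (p a : Z2) (k : int) : R :=
  ((sqnorm p)%:~R)^-1 - ((sqnorm (clsElt N p a k))%:~R)^-1.

Definition Aprime (R : realType) (N : nat) (p a : Z2) : 'M[R]_(ncls N p a) :=
  \matrix_(i < ncls N p a, j < ncls N p a)
    ((if (j : nat) == (((i : nat) + 1) %% ncls N p a)%N then
        rho R N p a ((i : nat)%:Z + 1) else 0)
     + (if (j : nat) == (((i : nat) + ncls N p a - 1) %% ncls N p a)%N then
        - rho R N p a ((i : nat)%:Z - 1) else 0)).

Definition rho_hyp (R : realType) (N : nat) (p a : Z2) : Prop :=
  [/\ zero_notin_cls N p a,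
      rho R N p a 0 < 0,
      (forall k : nat, (1 <= k <= (ncls N p a).-1)%N -> 0 <= rho R N p a k%:Z) &
      (count (fun k : nat => rho R N p a k%:Z == 0%R) (iota 1 (ncls N p a).-1) <= 1%N)%N].

(* A' = K D with D = diag(rho_0, ..., rho_(n-1)) and K the skew-symmetric
   adjacency matrix of the n-cycle.  The all-ones vector is a left null vector of
   A', so 0 is a root of its characteristic polynomial chi.  As n is odd, every
   principal (n-1)-minor of A' is, up to a rotation of the indices, a skew path
   matrix of even order, whose determinant is the product of the remaining rho_j;
   hence the linear coefficient of chi is \sum_i \prod_(j <> i) rho_j.  Since
   rho_0 < 0 while the other rho_j lie in [0, 1/|p|^2) with at most one of them
   zero, this sum is negative once n > |a|^2.  Then chi(x)/x is monic with a
   negative constant term, so chi has a positive root.  Finally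
   n = (2N+1)/gcd(2N+1, p_1, p_2) >= (2N+1)/gcd(p_1, p_2) grows with N. *)

Set Warnings "-notation-overridden,-ambiguous-paths,-notation-incompatible-prefix".
From HB Require Import structures.
From mathcomp Require Import all_boot all_order all_fingroup all_algebra ring lra zify.
From mathcomp Require Import reals polyrcf.
Import Order.TTheory GRing.Theory Num.Theory.
Local Open Scope ring_scope.

Lemma eq_of_count_le1 (T : eqType) (P : pred T) s x y : uniq s -> (count P s <= 1)%N ->
  x \in s -> y \in s -> P x -> P y -> x = y.
Proof.
move=> uniq_s count_le1 xs ys Px Py; apply/eqP/negPn/negP => xy.
have : (size [:: x; y] <= size (filter P s))%N.
  apply: uniq_leq_size; first by rewrite /= inE xy.
  by move=> z; rewrite !inE mem_filter => /orP[]/eqP->; apply/andP.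
by rewrite size_filter /=; lia.
Qed.

Lemma inv_le_subr_inv (R : realFieldType) (x y m : R) : 0 < x -> x + 1 <= y -> x <= m ->
  y^-1 <= (x^-1 - y^-1) * m.
Proof.
move=> x_gt0 xy x_le_m; have y_gt0 : 0 < y by lra.
have -> : x^-1 - y^-1 = (y - x) * (x^-1 * y^-1) by field; rewrite !gt_eqF.
have {1}-> : y^-1 = x * (x^-1 * y^-1) by field; rewrite !gt_eqF.
by rewrite mulrAC ler_pM2r ?mulr_gt0 ?invr_gt0 //; nra.
Qed.

Lemma sum_prod_but_one_lt0 (R : realFieldType) (I : finType) (r : I -> R) i0 (P : R) :
  (1 < #|I|)%N -> r i0 < 0 -> (forall j, j != i0 -> 0 <= r j < P) ->
  (forall j k, j != i0 -> k != i0 -> r j = 0 -> r k = 0 -> j = k) ->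
  P <= - r i0 * #|I|.-1%:R ->
  \sum_i \prod_(j | j != i) r j < 0.
Proof.
move=> I_gt1 ri0_lt0 r_bnd r0_uniq P_le.
(* If some r m (m <> i0) vanishes, only the term i = m survives; otherwise the
   term i <> i0 equals r i0 * Q / r i < r i0 * Q / P with Q = \prod_(j <> i0) r j. *)
have r_ge0 j : j != i0 -> 0 <= r j by case/r_bnd/andP.
have [m /andP[m_i0 /eqP rm0] | r_neq0] := pickP (fun j => (j != i0) && (r j == 0)).
  rewrite (bigD1 m) //= [X in _ + X]big1 ?addr0 => [|i im]; last first.
    by rewrite (bigD1 m) 1?eq_sym //= rm0 mul0r.
  rewrite (bigD1 i0) 1?eq_sym //= pmulr_llt0 //.
  apply: prodr_gt0 => j /andP[j_m j_i0]; rewrite lt_neqAle r_ge0 // andbT eq_sym.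
  by apply: contra j_m => /eqP rj0; apply/eqP; apply: r0_uniq.
have r_gt0 j : j != i0 -> 0 < r j.
  by move=> j_i0; rewrite lt_neqAle r_ge0 // andbT eq_sym; move: (r_neq0 j); rewrite j_i0 => /negbT.
have [j1 j1_i0] : exists j1, j1 \in predC1 i0 by apply/card_gt0P; rewrite cardC1; lia.
have P_gt0 : 0 < P by have /andP[_] := r_bnd _ j1_i0; apply: lt_trans; apply: r_gt0.
set Q := \prod_(j | j != i0) r j.
have Q_gt0 : 0 < Q by apply: prodr_gt0 => j; apply: r_gt0.
have term_lt i : i != i0 -> P * \prod_(j | j != i) r j < r i0 * Q.
  move=> i_i0; set X := \prod_(j | (j != i0) && (j != i)) r j.
  have -> : Q = r i * X by rewrite /Q (bigD1 i).
  have -> : \prod_(j | j != i) r j = r i0 * X.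
    by rewrite (bigD1 i0) 1?eq_sym //; congr (_ * _); apply: eq_bigl => j; rewrite andbC.
  have X_gt0 : 0 < X by apply: prodr_gt0 => j /andP[/r_gt0].
  rewrite mulrCA ltr_nM2l // ltr_pM2r //.
  by have /andP[] := r_bnd i i_i0.
have : P * \sum_i \prod_(j | j != i) r j < P * Q + (r i0 * Q) *+ #|I|.-1.
  rewrite mulr_sumr (bigD1 i0) //= ltrD2l -(cardC1 i0) -sumr_const.
  by apply: ltr_sum => [|i /term_lt //]; apply/hasP; exists j1; rewrite ?mem_index_enum.
have : P * Q + (r i0 * Q) *+ #|I|.-1 <= 0.
  by rewrite -mulr_natr mulrAC -mulrDl pmulr_lle0 //; lra.
move: (\sum_i _) => S; nra.
Qed.

Lemma coef1_prod (R : comNzRingType) (I : eqType) (e : seq I) (F : I -> {poly R}) :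
  uniq e ->
  (\prod_(i <- e) F i)`_1 = \sum_(i <- e) (F i)`_1 * \prod_(j <- e | j != i) (F j)`_0.
Proof.
elim: e => [|x e IH] /=; first by rewrite big_nil coef1 big_nil.
move=> /andP[xNe uniq_e]; rewrite !big_cons coefM big_ord_recr big_ord1 /= IH //.
rewrite coef0_prod addrC eqxx; congr (_ + _).
  congr (_ * _); rewrite [RHS]big_seq_cond [LHS]big_seq; apply: eq_bigl => j.
  by case: (boolP (j \in e)) => //= je; apply/esym/eqP => ejx; rewrite -ejx je in xNe.
rewrite big_distrr [LHS]big_seq [RHS]big_seq; apply: eq_bigr => i ie.
rewrite big_cons (_ : x != i) 1?mulrCA //.
by apply: contraNneq xNe => ->.
Qed.

Lemma char_poly_coef1 (R : comNzRingType) n (M : 'M[R]_n) :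
  (char_poly M)`_1 = \sum_i cofactor (- M) i i.
Proof.
rewrite /char_poly /determinant coef_sum.
under eq_bigr => s _ do rewrite -(rmorph_sign polyC) coefCM coef1_prod ?index_enum_uniq // big_distrr.
rewrite exchange_big /=; apply: eq_bigr => i _.
rewrite expand_cofactor [RHS]big_mkcond /=; apply: eq_bigr => s _.
rewrite !mxE coefB coefMn coefX coefC /= subr0 eq_sym.
have [si|] := eqVneq i (s i); last by rewrite mulr0n mul0r mulr0.
rewrite mulr1n mul1r; congr (_ * _); apply: eq_big => [j|j _]; first by rewrite eq_sym.
by rewrite !mxE coefB coefMn coefX coefC /= mul0rn sub0r.
Qed.

Lemma exists_eigenvalue_gt0 (R : rcfType) n (M : 'M[R]_n) :
  \det M = 0 -> (char_poly M)`_1 < 0 -> exists2 t : R, 0 < t & eigenvalue M t.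
Proof.
move=> detM0 coef1_lt0.
have /factor_theorem[q Mq] : root (char_poly M) 0.
  by rewrite /root horner_coef0 char_poly_det detM0 mulr0.
rewrite subr0 in Mq.
have q0_lt0 : q`_0 < 0 by rewrite Mq coefMX in coef1_lt0.
have q_monic : lead_coef q = 1.
  by have /monicP := char_poly_monic M; rewrite Mq lead_coefMX.
have [T qT] : exists T, forall x, T <= x -> lead_coef q <= q.[x].
  by apply: poly_pinfty_gt_lc; rewrite q_monic ltr01.
have b_gt0 : 0 < Num.max T 1 by rewrite lt_max ltr01 orbT.
have [x /andP[x_gt0 _] qx0] : {x | x \in `]0, Num.max T 1[ & root q x}.
  apply: poly_ivtoo; first exact: ltW.
  rewrite horner_coef0 pmulr_llt0 //.
  by apply: lt_le_trans ltr01 _; rewrite -q_monic; apply: qT; rewrite le_max lexx.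
exists x => //.
by rewrite eigenvalue_root_char /root Mq hornerMX (rootP qx0) mul0r.
Qed.

Definition skew_path_mx (R : nzRingType) m (s : nat -> R) : 'M[R]_m :=
  \matrix_(k, l) (s l * ((l == k.+1 :> nat)%:R - (l.+1 == k :> nat)%:R)).
Arguments skew_path_mx {R} m s.

Lemma det_skew_path_mxSS (R : comNzRingType) m (s : nat -> R) :
  \det (skew_path_mx m.+2 s) = s 0%N * s 1%N * \det (skew_path_mx m (fun l => s l.+2)).
Proof.
rewrite (expand_det_row _ ord0).
pose j1 : 'I_m.+2 := Ordinal (isT : (1 < m.+2)%N).
rewrite (bigD1 j1) //= big1 ?addr0 => [|j]; last first.
  by rewrite !mxE -val_eqE /= => /negPf ->; rewrite subr0 mulr0 mul0r.
rewrite !mxE /= subr0 mulr1 /cofactor /= expr1.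
rewrite (expand_det_col _ ord0) (bigD1 ord0) //= big1 ?addr0 => [|i]; last first.
  rewrite !mxE /bump /= ?add1n eqSS -val_eqE /= eq_sym => /negPf ->.
  by rewrite subrr mulr0 mul0r.
rewrite !mxE /cofactor /= expr0 mul1r.
have -> : row' ord0 (col' ord0 (row' ord0 (col' j1 (skew_path_mx m.+2 s)))) =
          skew_path_mx m (fun l => s l.+2) by apply/matrixP => k l; rewrite !mxE.
ring.
Qed.

Lemma det_skew_path_mx_double (R : comNzRingType) m (s : nat -> R) :
  \det (skew_path_mx m.*2 s) = \prod_(l < m.*2) s l.
Proof.
elim: m s => [|m IH] s; first by rewrite det_mx00 big_ord0.
by rewrite doubleS det_skew_path_mxSS IH !big_ord_recl mulrA.
Qed.

Definition skew_cycle_mx (R : nzRingType) n (r : 'I_n -> R) : 'M[R]_n :=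
  \matrix_(i, j) (r j * ((j == ordS i)%:R - (j == ord_pred i)%:R)).
Arguments skew_cycle_mx {R n} r.

Definition rot n : 'S_n := perm (@ordS_inj n).

Lemma rotE n (i : 'I_n) : rot n i = ordS i.
Proof. exact: permE. Qed.

Lemma rotVE n (i : 'I_n) : (rot n)^-1%g i = ord_pred i.
Proof. by apply: (@perm_inj _ (rot n)); rewrite permKV rotE ord_predK. Qed.

Lemma rotX0 n m : val ((rot n.+1 ^+ m)%g ord0) = (m %% n.+1)%N.
Proof.
elim: m => [|m IH]; first by rewrite expg0 perm1 mod0n.
by rewrite expgSr permM rotE /= IH -addn1 modnDml addn1.
Qed.

Lemma cofactor_relabel (R : comNzRingType) n (M : 'M[R]_n) (t : 'S_n) i :
  cofactor (\matrix_(k, l) M (t k) (t l)) i i = cofactor M (t i) (t i).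
Proof.
rewrite !expand_cofactor [RHS](reindex_inj (conjg_inj t)) /=.
apply: eq_big => [s | s _]; first by rewrite permJ (inj_eq perm_inj).
rewrite odd_permJ; congr (_ * _); rewrite [RHS](reindex_inj (@perm_inj _ t)) /=.
apply: eq_big => [k | k _]; first by rewrite (inj_eq perm_inj).
by rewrite !mxE permJ.
Qed.

Lemma skew_cycle_mx_relabel (R : comNzRingType) n (r : 'I_n -> R) (t : 'S_n) :
  commute t (rot n) ->
  \matrix_(k, l) skew_cycle_mx r (t k) (t l) = skew_cycle_mx (fun j => r (t j)).
Proof.
move=> ct; apply/matrixP => k l; rewrite !mxE -!rotE -!rotVE.
rewrite -!permM ct (commuteV ct) !permM.
by rewrite !(inj_eq perm_inj).
Qed.

Lemma skew_cycle_mx_minor0 (R : comNzRingType) n (r : 'I_n.+1 -> R) :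
  row' ord0 (col' ord0 (skew_cycle_mx r)) = skew_path_mx n (fun l => r (inord l.+1)).
Proof.
apply/matrixP => k l; rewrite !mxE.
have -> : inord l.+1 = lift ord0 l by apply: val_inj; rewrite /= inordK // ltnS.
congr (_ * (_%:R - _%:R)); rewrite -val_eqE /= /bump /= ?add1n.
  have := ltn_ord k; rewrite -ltnS leq_eqVlt => /predU1P[[e]|ltkn].
    by rewrite e modnn (ltn_eqF (ltn_ord l)).
  by rewrite modn_small.
by rewrite add0n modnDr modn_small // ltnS ltnW.
Qed.

Lemma diag_cofactor_skew_cycle_mx (R : comNzRingType) n (r : 'I_n -> R) i :
  odd n -> cofactor (skew_cycle_mx r) i i = \prod_(j | j != i) r j.
Proof.
(* Relabelling by the rotation t sending 0 to i reduces to the minor at 0. *)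
move=> odd_n; move: r i; rewrite -[n](odd_double_half n) odd_n add1n.
move: n./2 => m r i; pose t := (rot m.*2.+1 ^+ i)%g.
have t0 : t ord0 = i by apply: val_inj; rewrite rotX0 modn_small.
rewrite -t0 -cofactor_relabel skew_cycle_mx_relabel; last exact/commute_sym/commuteX.
rewrite /cofactor expr0 mul1r skew_cycle_mx_minor0 det_skew_path_mx_double.
rewrite (reindex_inj (@perm_inj _ t)) /= [RHS]big_mkcond big_ord_recl /=.
rewrite (inj_eq perm_inj) eqxx mul1r; apply: eq_bigr => l _.
rewrite (inj_eq perm_inj) /=.
by have -> : inord l.+1 = lift ord0 l :> 'I_m.*2.+1 by apply: val_inj; rewrite /= inordK // ltnS.
Qed.

Lemma char_poly_skew_cycle_mx_coef1 (R : comNzRingType) n (r : 'I_n -> R) : odd n ->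
  (char_poly (skew_cycle_mx r))`_1 = \sum_i \prod_(j | j != i) r j.
Proof.
move=> odd_n; rewrite char_poly_coef1; apply: eq_bigr => i _.
rewrite -scaleN1r cofactorZ diag_cofactor_skew_cycle_mx //.
by case: n odd_n r i => [|n] //= odd_n r i; rewrite -signr_odd (negPf odd_n) mul1r.
Qed.

Lemma sum_indicator_bij (R : nzRingType) n (f : 'I_n -> 'I_n) j :
  bijective f -> \sum_i ((j == f i)%:R : R) = 1.
Proof.
move=> [g fK gK]; rewrite (reindex_inj (can_inj gK)) /=.
rewrite (bigD1 j) //= gK eqxx big1 ?addr0 // => k.
by rewrite gK eq_sym => /negPf ->.
Qed.

Lemma det_skew_cycle_mx (R : fieldType) n (r : 'I_n -> R) : (0 < n)%N ->
  \det (skew_cycle_mx r) = 0.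
Proof.
move=> n_gt0; apply/eqP/det0P; exists (const_mx 1).
  by apply/eqP => /rowP /(_ (Ordinal n_gt0)); rewrite !mxE; apply/eqP; rewrite oner_eq0.
apply/rowP => j; rewrite !mxE.
under eq_bigr => i _ do rewrite !mxE mul1r mulrBr.
by rewrite sumrB -!mulr_sumr !sum_indicator_bij ?subrr //; [exact: ord_pred_bij | exact: ordS_bij].
Qed.

Definition content (p : Z2) : nat := gcdn `|p.1| `|p.2|.

Definition class_period (N : nat) (p : Z2) : nat :=
  (2 * N + 1) %/ gcdn (2 * N + 1) (content p).

Lemma content_gt0 (p : Z2) : p != (0, 0) -> (0 < content p)%N.
Proof. by case: p => x y; rewrite xpair_eqE negb_and gcdn_gt0 !absz_gt0. Qed.

Lemma eq_hat1 N x y : (hat1 N x == hat1 N y) = (modulus N %| x - y)%Z.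
Proof.
rewrite /hat1 (can_eq (addrK _)) eqz_mod_dvd.
by rewrite opprD addrACA subrr addr0.
Qed.

Lemma dvdn_mul2_div_gcd m u x y : (0 < m)%N ->
  ((m %| u * x) && (m %| u * y))%N = (m %/ gcdn m (gcdn x y) %| u)%N.
Proof.
move=> m_gt0; rewrite -dvdn_gcd -muln_gcdr.
have -> : (m %| u * gcdn x y)%N = (m %| gcdn (u * m) (u * gcdn x y))%N.
  by rewrite dvdn_gcd (dvdn_mull u (dvdnn m)).
rewrite -muln_gcdr -{1}(divnK (dvdn_gcdl m (gcdn x y))).
by rewrite dvdn_pmul2r // gcdn_gt0 m_gt0.
Qed.

Lemma eq_clsElt N p a k l :
  (clsElt N p a k == clsElt N p a l) = (k == l %[mod (class_period N p)%:Z])%Z.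
Proof.
rewrite /clsElt /hat xpair_eqE /= !eq_hat1 eqz_mod_dvd.
have dif (c u : int) : c + k * u - (c + l * u) = (k - l) * u by ring.
rewrite !dif !dvdzE !abszM.
by rewrite dvdn_mul2_div_gcd // /modulus addn1.
Qed.

Lemma class_period_mul_gcd N p :
  (class_period N p * gcdn (2 * N + 1) (content p) = 2 * N + 1)%N.
Proof. by rewrite divnK // dvdn_gcdl. Qed.

Lemma odd_class_period N p : odd (class_period N p).
Proof.
by have := congr1 odd (class_period_mul_gcd N p); rewrite oddM oddD oddM /= => /andP[].
Qed.

Lemma class_period_le N p : (class_period N p <= 2 * N + 1)%N.
Proof. exact: leq_div. Qed.

Lemma class_period_content N p : (0 < content p)%N ->
  (2 * N + 1 <= class_period N p * content p)%N.
Proof.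
move=> cp_gt0; rewrite -{1}(class_period_mul_gcd N p) leq_mul2l.
by rewrite dvdn_leq ?dvdn_gcdr ?orbT.
Qed.

Lemma ncls_class_period N p a : ncls N p a = class_period N p.
Proof.
have d_gt0 : (0 < class_period N p)%N by rewrite odd_gt0 ?odd_class_period.
pose f k := clsElt N p a k%:Z.
have f_mod k : f (k %% class_period N p)%N = f k.
  by apply/eqP; rewrite eq_clsElt -modz_nat modz_mod.
have uniq_f : uniq [seq f k | k <- iota 0 (class_period N p)].
  rewrite map_inj_in_uniq ?iota_uniq // => k l; rewrite !mem_iota => /andP[_ kd] /andP[_ ld].
  by move/eqP; rewrite eq_clsElt !modz_nat !modn_small // => /eqP[].
rewrite /ncls -/f -(size_iota 0 (class_period N p)) -(size_map f); apply: perm_size.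
apply: uniq_perm => //; first exact: undup_uniq.
move=> x; rewrite mem_undup; apply/mapP/mapP => [[k _ ->]|[k]].
  by exists (k %% class_period N p)%N; rewrite ?mem_iota ?ltn_mod.
rewrite !mem_iota => /andP[_ kd] ->; exists k => //.
by rewrite mem_iota (leq_trans kd) ?class_period_le.
Qed.

Lemma rho_mod (R : realType) N p a k l : (k == l %[mod (ncls N p a)%:Z])%Z ->
  rho R N p a k = rho R N p a l.
Proof. by rewrite ncls_class_period -(eq_clsElt N p a) /rho => /eqP ->. Qed.

Lemma Aprime_skew_cycle_mx (R : realType) N p a :
  Aprime R N p a = skew_cycle_mx (fun j : 'I_(ncls N p a) => rho R N p a j).
Proof.
set n := ncls N p a; have n_gt0 : (0 < n)%N by rewrite /n ncls_class_period odd_gt0 ?odd_class_period.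
apply/matrixP => i j; rewrite !mxE -!val_eqE /= addn1 subn1.
have rho_next : val j = (i.+1 %% n)%N -> rho R N p a (i%:Z + 1) = rho R N p a j.
  by move=> ->; apply: rho_mod; rewrite -modz_nat modz_mod -addn1 PoszD.
have rho_prev : val j = ((i + n).-1 %% n)%N -> rho R N p a (i%:Z - 1) = rho R N p a j.
  move=> ->; apply: rho_mod; rewrite -modz_nat modz_mod -/n.
  have -> : ((i + n).-1)%:Z = i%:Z - 1 + n%:Z by lia.
  by rewrite modzDr.
by case: eqP => [/rho_next->|_]; case: eqP => [/rho_prev->|_] /=; ring.
Qed.

Lemma sqnorm_gt0 (h : Z2) : h != (0, 0) -> 0 < sqnorm h.
Proof.
case: h => x y; rewrite xpair_eqE negb_and /sqnorm /= => /orP[] h_neq0.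
  by rewrite ltr_wpDr ?sqr_ge0 // exprn_even_gt0.
by rewrite ltr_wpDl ?sqr_ge0 // exprn_even_gt0.
Qed.

Lemma clsElt0 N p a : inD N a -> clsElt N p a 0 = a.
Proof.
have hat1_id x : - N%:Z <= x <= N%:Z -> hat1 N x = x.
  by move=> /andP[? ?]; rewrite /hat1 /modulus modz_small ?addrK //; apply/andP; split; lia.
case: a => x y /andP[Dx Dy].
by rewrite /clsElt /hat /= !mul0r !addr0 !hat1_id.
Qed.

Lemma rho_lt_inv (R : realType) N p a k : zero_notin_cls N p a ->
  rho R N p a k < (sqnorm p)%:~R^-1.
Proof.
by move=> cls_neq0; rewrite /rho ltrBlDr ltrDl invr_gt0 ltr0z sqnorm_gt0.
Qed.

Lemma Aprime_eigenvalue_gt0 (R : realType) N p a :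
  p != (0, 0) -> inD N a -> rho_hyp R N p a -> (`|sqnorm a| < ncls N p a)%N ->
  exists2 t : R, 0 < t & eigenvalue (Aprime R N p a) t.
Proof.
move=> p_neq0 aD [cls_neq0 rho0_lt0 rho_ge0 count_rho0] n_big.
have sa_gt0 : 0 < sqnorm a by rewrite -(clsElt0 N p a aD) sqnorm_gt0.
have n_gt1 : (1 < ncls N p a)%N by lia.
have odd_n : odd (ncls N p a) by rewrite ncls_class_period odd_class_period.
rewrite Aprime_skew_cycle_mx; apply: exists_eigenvalue_gt0.
  by apply: det_skew_cycle_mx; lia.
rewrite (char_poly_skew_cycle_mx_coef1 _ _ _ odd_n).
apply: (sum_prod_but_one_lt0 _ _ _ (Ordinal (ltnW n_gt1)) (sqnorm p)%:~R^-1).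
- by rewrite card_ord.
- exact: rho0_lt0.
- move=> j; rewrite -val_eqE /= -lt0n => j_gt0.
  by rewrite rho_lt_inv // andbT rho_ge0 // j_gt0 -ltnS prednK //=; lia.
- move=> j k; rewrite -!val_eqE /= -!lt0n => j_gt0 k_gt0 rj0 rk0; apply: val_inj.
  apply: (eq_of_count_le1 _ _ _ _ _ (iota_uniq 1 _) count_rho0); rewrite /= ?rj0 ?rk0 //.
    by rewrite mem_iota j_gt0 add1n prednK ?ltn_ord //; lia.
  by rewrite mem_iota k_gt0 add1n prednK ?ltn_ord //; lia.
- have sp_gt0 := sqnorm_gt0 p p_neq0.
  move: rho0_lt0; rewrite card_ord /rho (clsElt0 N p a aD) opprB subr_lt0.
  rewrite ltf_pV2 ?posrE ?ltr0z // ltr_int => sa_lt_sp.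
  apply: inv_le_subr_inv; first by rewrite ltr0z.
    by rewrite -[1]/(1%:~R) -intrD ler_int; lia.
  by rewrite pmulrn ler_int; lia.
Qed.

Theorem theorem1 (R : realType) (p a : Z2) :
  p != (0, 0) ->
  (exists N0 : nat, forall N : nat, (N0 <= N)%N -> rho_hyp R N p a) ->
  exists N1 : nat, forall N : nat, (N1 <= N)%N ->
    inD N a /\ exists lambda : R, lambda != 0 /\ eigenvalue (Aprime R N p a) lambda.
Proof.
move=> p_neq0 [N0 hyp].
exists (N0 + `|a.1| + `|a.2| + content p * `|sqnorm a|)%N => N N_ge.
have aD : inD N a by apply/andP; split; apply/andP; split; lia.
have n_big : (`|sqnorm a| < ncls N p a)%N.
  have := class_period_content N p (content_gt0 p p_neq0).
  by rewrite -(ncls_class_period N p a); nia.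
have [t t_gt0 eig_t] := Aprime_eigenvalue_gt0 R N p a p_neq0 aD (hyp N ltac:(lia)) n_big.
by split=> //; exists t; rewrite gt_eqF.
Qed.
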